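(* Let $(\mathcal V,[\cdot,\cdots,\cdot],S)$ be a generalized metric $n$-Leibniz algebra. Define the bilinear form $B$ on $\otimes^{n-1}\mathcal V$ by (bilinear extension of) $$B(u_1\otimes\cdots\otimes u_{n-1},v_1\otimes\cdots\otimes v_{n-1})=S([u_1,\dots,u_{n-1},v_1],v_2,\dots,v_{n-1}).$$ Then $B$ is symmetric and associative-invariant with respect to the bracket $[\cdot,\cdot]_{\mathsf F}$, i.e. $B(U,[V,W]_{\mathsf F})=B([U,V]_{\mathsf F},W)$ for all $U,V,W\in\otimes^{n-1}\mathcal V$.
   Context: All vector spaces are finite-dimensional over $\mathbb R$. An $n$-Leibniz algebra is a vector space $\mathcal V$ with an $n$-linear map $[\cdot,\cdots,\cdot]$ satisfying $[u_1,\dots,u_{n-1},[v_1,\dots,v_n]]=\sum_{i=1}^n[v_1,\dots,[u_1,\dots,u_{n-1},v_i],\dots,v_n]$. A symmetric $S\in\mathrm{Sym}^{n-1}(\mathcal V^* )$ is non-degenerate if $S(u,v_1,\dots,v_{n-2})=0$ for all $v_j$ implies $u=0$. A generalized metric $n$-Leibniz algebra is an $n$-Leibniz algebra with a symmetric non-degenerate $S\in\mathrm{Sym}^{n-1}(\mathcal V^* )$ satisfying (a) unitarity: $\sum_{i=1}^{n-1}S(v_1,\dots,[u_1,\dots,u_{n-1},v_i],\dots,v_{n-1})=0$ and (b) symmetry: $S([u_1,\dots,u_{n-1},v_1],v_2,\dots,v_{n-1})=S([v_1,\dots,v_{n-1},u_1],u_2,\dots,u_{n-1})$. The bracket on $\otimes^{n-1}\mathcal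 V$ is defined on decomposables $U=u_1\otimes\cdots\otimes u_{n-1}$, $V=v_1\otimes\cdots\otimes v_{n-1}$ by $[U,V]_{\mathsf F}=\sum_{i=1}^{n-1}v_1\otimes\cdots\otimes v_{i-1}\otimes[u_1,\dots,u_{n-1},v_i]\otimes v_{i+1}\otimes\cdots\otimes v_{n-1}$ and extended bilinearly; $(\otimes^{n-1}\mathcal V,[\cdot,\cdot]_{\mathsf F})$ is a Leibniz algebra. *)

From HB Require Import structures.
From mathcomp Require Import all_boot all_order all_algebra all_fingroup.
Set Implicit Arguments. Unset Strict Implicit. Unset Printing Implicit Defensive.
Import Order.TTheory GRing.Theory Num.Theory.
Local Open Scope ring_scope.

(* Conventions: n = k.+2 (so n >= 2), hence n-1 = k.+1 and n-2 = k.
   The vector space V is R^d, realised as row vectors 'rV[R]_d.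
   The n-ary bracket [u_1,...,u_{n-1},v] is written  br us v  with us : 'I_(k.+1) -> V. *)

Definition upd (T : Type) (m : nat) (f : 'I_m -> T) (i : 'I_m) (x : T) : 'I_m -> T :=
  fun j => if j == i then x else f j.

Definition multilinear (R : pzRingType) (V W : lmodType R) (m : nat)
    (f : ('I_m -> V) -> W) : Prop :=
  forall (vs : 'I_m -> V) (i : 'I_m) (a : R) (x y : V),
    f (upd vs i (a *: x + y)) = a *: f (upd vs i x) + f (upd vs i y).

Definition linear_map (R : pzRingType) (V W : lmodType R) (f : V -> W) : Prop :=
  forall (a : R) (x y : V), f (a *: x + y) = a *: f x + f y.

Definition nlinear_bracket (R : realFieldType) (d k : nat)
    (br : ('I_k.+1 -> 'rV[R]_d) -> 'rV[R]_d -> 'rV[R]_d) : Prop :=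
  (forall v, multilinear (fun us => br us v)) /\ (forall us, linear_map (br us)).

Definition leibniz_identity (R : realFieldType) (d k : nat)
    (br : ('I_k.+1 -> 'rV[R]_d) -> 'rV[R]_d -> 'rV[R]_d) : Prop :=
  forall (us vs : 'I_k.+1 -> 'rV[R]_d) (w : 'rV[R]_d),
    br us (br vs w) =
      \sum_(i < k.+1) br (upd vs i (br us (vs i))) w + br vs (br us w).

Definition nLeibniz_algebra (R : realFieldType) (d k : nat)
    (br : ('I_k.+1 -> 'rV[R]_d) -> 'rV[R]_d -> 'rV[R]_d) : Prop :=
  nlinear_bracket br /\ leibniz_identity br.

Definition sym_form (R : realFieldType) (d k : nat)
    (S : ('I_k.+1 -> 'rV[R]_d) -> R) : Prop :=
  multilinear (W := R^o) S /\
  forall (vs : 'I_k.+1 -> 'rV[R]_d) (s : 'S_k.+1), S (vs \o s) = S vs.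

Definition nondegenerate (R : realFieldType) (d k : nat)
    (S : ('I_k.+1 -> 'rV[R]_d) -> R) : Prop :=
  forall u : 'rV[R]_d,
    (forall vs : 'I_k.+1 -> 'rV[R]_d, S (upd vs ord0 u) = 0) -> u = 0.

Definition unitarity (R : realFieldType) (d k : nat)
    (br : ('I_k.+1 -> 'rV[R]_d) -> 'rV[R]_d -> 'rV[R]_d)
    (S : ('I_k.+1 -> 'rV[R]_d) -> R) : Prop :=
  forall us vs : 'I_k.+1 -> 'rV[R]_d,
    \sum_(i < k.+1) S (upd vs i (br us (vs i))) = 0.

Definition symmetry_cond (R : realFieldType) (d k : nat)
    (br : ('I_k.+1 -> 'rV[R]_d) -> 'rV[R]_d -> 'rV[R]_d)
    (S : ('I_k.+1 -> 'rV[R]_d) -> R) : Prop :=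
  forall us vs : 'I_k.+1 -> 'rV[R]_d,
    S (upd vs ord0 (br us (vs ord0))) = S (upd us ord0 (br vs (us ord0))).

Definition gen_metric_nLeibniz (R : realFieldType) (d k : nat)
    (br : ('I_k.+1 -> 'rV[R]_d) -> 'rV[R]_d -> 'rV[R]_d)
    (S : ('I_k.+1 -> 'rV[R]_d) -> R) : Prop :=
  [/\ nLeibniz_algebra br, sym_form S, nondegenerate S,
      unitarity br S & symmetry_cond br S].

(* The tensor power (x)^{k.+1} R^d, in coordinates w.r.t. the basis
   e_{J 0} (x) ... (x) e_{J k}, J : {ffun 'I_(k.+1) -> 'I_d}. *)
Notation tensor R d k := {ffun {ffun 'I_k.+1 -> 'I_d} -> R^o}.

Definition tens (R : realFieldType) (d k : nat) (vs : 'I_k.+1 -> 'rV[R]_d)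
  : tensor R d k :=
  [ffun J : {ffun 'I_k.+1 -> 'I_d} => \prod_(i < k.+1) vs i ord0 (J i)].

Definition evec (R : realFieldType) (d : nat) (j : 'I_d) : 'rV[R]_d :=
  delta_mx ord0 j.
Definition bvecs (R : realFieldType) (d k : nat) (J : {ffun 'I_k.+1 -> 'I_d})
  : 'I_k.+1 -> 'rV[R]_d := fun i => evec R (J i).

Definition bracketF_dec (R : realFieldType) (d k : nat)
    (br : ('I_k.+1 -> 'rV[R]_d) -> 'rV[R]_d -> 'rV[R]_d)
    (us vs : 'I_k.+1 -> 'rV[R]_d) : tensor R d k :=
  \sum_(i < k.+1) tens (upd vs i (br us (vs i))).

Definition bracketF (R : realFieldType) (d k : nat)
    (br : ('I_k.+1 -> 'rV[R]_d) -> 'rV[R]_d -> 'rV[R]_d)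
    (U W : tensor R d k) : tensor R d k :=
  \sum_(I : {ffun 'I_k.+1 -> 'I_d}) \sum_(J : {ffun 'I_k.+1 -> 'I_d})
     (U I * W J) *: bracketF_dec br (bvecs R I) (bvecs R J).

Definition B_dec (R : realFieldType) (d k : nat)
    (br : ('I_k.+1 -> 'rV[R]_d) -> 'rV[R]_d -> 'rV[R]_d)
    (S : ('I_k.+1 -> 'rV[R]_d) -> R)
    (us vs : 'I_k.+1 -> 'rV[R]_d) : R :=
  S (upd vs ord0 (br us (vs ord0))).

Definition Bform (R : realFieldType) (d k : nat)
    (br : ('I_k.+1 -> 'rV[R]_d) -> 'rV[R]_d -> 'rV[R]_d)
    (S : ('I_k.+1 -> 'rV[R]_d) -> R)
    (U W : tensor R d k) : R :=
  \sum_(I : {ffun 'I_k.+1 -> 'I_d}) \sum_(J : {ffun 'I_k.+1 -> 'I_d})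
     U I * W J * B_dec br S (bvecs R I) (bvecs R J).

From HB Require Import structures.
From mathcomp Require Import all_boot all_order all_algebra all_fingroup.
From Stdlib Require Import FunctionalExtensionality.
From mathcomp Require Import ring.
Import Order.TTheory GRing.Theory Num.Theory.
Local Open Scope ring_scope.

(* Symmetry of B on decomposables is condition (b).  For invariance on
   decomposables, split the sum over positions in B(U, [V, W]_F): the term at
   the first slot is S([U,[V,w_1]], w_2, ...), and by unitarity (applied to V
   and to W with w_1 replaced by [U,w_1]) the remaining terms add up to
   -S([V,[U,w_1]], w_2, ...).  The fundamental identity rewrites
   [U,[V,w_1]] - [V,[U,w_1]] as the sum over i of [v_1,..,[U,v_i],..,v_(n-1),w_1],
   which is B([U,V]_F, W).  Since B and [.,.]_F are bilinear extensions over
   basis tensors, the general case follows from the fact that a multilinear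
   form is determined by its values on tuples of basis vectors. *)

Section Update.
Context {T : Type} {m : nat}.
Implicit Types (f : 'I_m -> T) (i j : 'I_m) (x y : T).

Lemma upd_eq f i x : upd f i x i = x.
Proof. by rewrite /upd eqxx. Qed.

Lemma upd_neq f i j x : j != i -> upd f i x j = f j.
Proof. by rewrite /upd => /negbTE ->. Qed.

Lemma upd_id f i : upd f i (f i) = f.
Proof. by apply: functional_extensionality => j; rewrite /upd; case: eqP => // ->. Qed.

Lemma upd_upd f i x y : upd (upd f i x) i y = upd f i y.
Proof. by apply: functional_extensionality => j; rewrite /upd; case: eqP. Qed.

Lemma updC f i j x y : i != j -> upd (upd f i x) j y = upd (upd f j y) i x.
Proof.
move=> neq_ij; apply: functional_extensionality => l; rewrite /upd.
by case: (eqVneq l j) => [->|//]; rewrite eq_sym (negbTE neq_ij).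
Qed.

End Update.

Lemma sum_ffun_pairing (R : pzRingType) (T : finType) (I : Type) (r : seq I)
    (F : I -> {ffun T -> R^o}) (g : T -> R) :
  \sum_L (\sum_(j <- r) F j) L * g L = \sum_(j <- r) \sum_L F j L * g L.
Proof. by under eq_bigr do rewrite sum_ffunE mulr_suml; rewrite exchange_big. Qed.

Lemma scale_ffun_pairing (R : pzRingType) (T : finType) (c : R)
    (X : {ffun T -> R^o}) (g : T -> R) :
  \sum_L (c *: X) L * g L = c * \sum_L X L * g L.
Proof. by rewrite mulr_sumr; apply: eq_bigr => L _; rewrite ffunE mulrA. Qed.

Section MultilinearForms.
Context {R : realFieldType} {d k : nat}.
Implicit Types (vs : 'I_k.+1 -> 'rV[R]_d) (J L : {ffun 'I_k.+1 -> 'I_d}).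

Definition multilinear_form (f : ('I_k.+1 -> 'rV[R]_d) -> R) : Prop :=
  forall vs i (a : R) x y,
    f (upd vs i (a *: x + y)) = a * f (upd vs i x) + f (upd vs i y).

Section Form.
Variable f : ('I_k.+1 -> 'rV[R]_d) -> R.
Hypothesis f_ml : multilinear_form f.

Lemma multilinear_form_upd0 vs i : f (upd vs i 0) = 0.
Proof.
have := f_ml vs i 1 0 0; rewrite scale1r addr0 mul1r.
by move/(congr1 (fun t => t - f (upd vs i 0))); rewrite subrr addrK.
Qed.

Lemma multilinear_form_upd_sum vs i (I : Type) (r : seq I)
    (c : I -> R) (x : I -> 'rV[R]_d) :
  f (upd vs i (\sum_(j <- r) c j *: x j)) = \sum_(j <- r) c j * f (upd vs i (x j)).
Proof.
elim: r => [|j r IH]; first by rewrite !big_nil multilinear_form_upd0.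
by rewrite !big_cons f_ml IH.
Qed.

Lemma multilinear_form_upd_sum1 vs i (I : Type) (r : seq I) (x : I -> 'rV[R]_d) :
  f (upd vs i (\sum_(j <- r) x j)) = \sum_(j <- r) f (upd vs i (x j)).
Proof.
have := multilinear_form_upd_sum vs i _ r (fun=> 1) x.
by under eq_bigr do rewrite scale1r; under [in RHS]eq_bigr do rewrite mul1r.
Qed.

(* Induction on the number of leading slots not yet known to hold basis
   vectors; the next such slot is expanded in the standard basis. *)
Lemma multilinear_form_basis_eq0 :
  (forall J, f (bvecs R J) = 0) -> forall vs, f vs = 0.
Proof.
move=> f_basis0.
suff basis_tail : forall p vs,
    (forall i : 'I_k.+1, (p <= i)%N -> exists j, vs i == evec R j) -> f vs = 0.
  by move=> vs; apply: (basis_tail k.+1) => i; rewrite leqNgt ltn_ord.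
elim=> [|p IH] vs vs_basis.
  pose J := [ffun i => xchoose (vs_basis i (leq0n i))].
  suff -> : vs = bvecs R J by apply: f_basis0.
  apply: functional_extensionality => i; rewrite /bvecs ffunE.
  exact/eqP/(xchooseP (vs_basis i (leq0n i))).
have [p_lt|p_ge] := ltnP p k.+1; last first.
  by apply: IH => i; rewrite leqNgt (leq_trans (ltn_ord i) p_ge).
pose i0 := Ordinal p_lt.
rewrite -(upd_id vs i0) [vs i0]row_sum_delta multilinear_form_upd_sum.
apply: big1 => j _; rewrite IH ?mulr0 // => i le_pi.
have [->|ne] := eqVneq i i0; first by exists j; rewrite upd_eq.
rewrite upd_neq //; apply: vs_basis.
by rewrite ltn_neqAle le_pi andbT; apply: contra ne => /eqP e; apply/eqP/val_inj.
Qed.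

End Form.

Lemma tens_bvecs J L : tens (bvecs R J) L = (J == L)%:R.
Proof.
rewrite ffunE; have [<-|neq_JL] := eqVneq J L.
  by apply: big1 => i _; rewrite /bvecs /evec mxE !eqxx.
have [i neq_i] : exists i, J i != L i.
  apply/existsP; apply: contraR neq_JL; rewrite negb_exists => /forallP eqJL.
  by apply/eqP/ffunP => i; apply/eqP; move: (eqJL i); rewrite negbK.
by rewrite (bigD1 i) //= /bvecs /evec mxE eqxx /= eq_sym (negbTE neq_i) mul0r.
Qed.

Lemma tens_upd vs i z L :
  tens (upd vs i z) L = z 0 (L i) * \prod_(l | l != i) vs l 0 (L l).
Proof.
rewrite ffunE (bigD1 i) //= upd_eq; congr (_ * _).
by apply: eq_bigr => l neq_li; rewrite upd_neq.
Qed.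

Lemma multilinear_form_expand f : multilinear_form f -> forall vs,
  \sum_L tens vs L * f (bvecs R L) = f vs.
Proof.
move=> f_ml vs; apply/eqP; rewrite eq_sym -subr_eq0; apply/eqP; move: vs.
apply: (multilinear_form_basis_eq0 (fun vs => f vs - \sum_L tens vs L * f (bvecs R L))).
  move=> vs i a x y /=; rewrite f_ml.
  have -> : \sum_L tens (upd vs i (a *: x + y)) L * f (bvecs R L) =
      a * (\sum_L tens (upd vs i x) L * f (bvecs R L)) +
      \sum_L tens (upd vs i y) L * f (bvecs R L).
    rewrite mulr_sumr -big_split /=; apply: eq_bigr => L _.
    by rewrite !tens_upd !mxE; ring.
  ring.
move=> J; rewrite (bigD1 J) //= tens_bvecs eqxx mul1r big1 ?addr0 ?subrr // => L neq_LJ.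
by rewrite tens_bvecs eq_sym (negbTE neq_LJ) mul0r.
Qed.

End MultilinearForms.

Section Invariance.
Variables (R : realFieldType) (d k : nat).
Variables (br : ('I_k.+1 -> 'rV[R]_d) -> 'rV[R]_d -> 'rV[R]_d)
          (S : ('I_k.+1 -> 'rV[R]_d) -> R).
Hypotheses (br_linear : forall us, linear_map (br us))
           (br_leibniz : leibniz_identity br)
           (S_ml : multilinear_form S)
           (S_unitary : unitarity br S)
           (S_symmetry : symmetry_cond br S).
Implicit Types (us vs ws : 'I_k.+1 -> 'rV[R]_d) (U V W X : tensor R d k).

Local Notation B := (B_dec br S).

Lemma B_dec_multilinear us : multilinear_form (B us).
Proof.
move=> vs i a x y; rewrite /B_dec.
have [->|neq_i0] := eqVneq i ord0; first by rewrite !upd_eq !upd_upd br_linear S_ml.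
have neq_0i : ord0 != i by rewrite eq_sym.
by rewrite !(upd_neq _ _ _ _ neq_0i) !(updC _ _ _ _ _ neq_i0) S_ml.
Qed.

Lemma B_decC us vs : B us vs = B vs us.
Proof. exact: S_symmetry. Qed.

Lemma B_dec_invariant us vs ws :
  \sum_i B us (upd ws i (br vs (ws i))) = \sum_i B (upd vs i (br us (vs i))) ws.
Proof.
set w0 := ws ord0.
have /eqP unit_vs := S_unitary vs (upd ws ord0 (br us w0)).
rewrite big_ord_recl upd_upd upd_eq addrC addr_eq0 in unit_vs.
have leib : \sum_i br (upd vs i (br us (vs i))) w0 =
    (-1) *: br vs (br us w0) + br us (br vs w0).
  by rewrite (br_leibniz us vs w0) scaleN1r addrC addrK.
rewrite /B_dec -multilinear_form_upd_sum1 // leib S_ml mulN1r -(eqP unit_vs).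
rewrite big_ord_recl upd_upd upd_eq addrC; congr (_ + _); apply: eq_bigr => j _.
by rewrite !(upd_neq _ _ _ _ (neq_lift _ _)) (updC _ _ _ _ _ (negbT _)).
Qed.

Lemma pairing_bracketF_dec us vs ws :
  \sum_L (bracketF_dec br vs ws) L * B us (bvecs R L) =
  \sum_i B us (upd ws i (br vs (ws i))).
Proof.
rewrite /bracketF_dec sum_ffun_pairing; apply: eq_bigr => i _.
exact/multilinear_form_expand/B_dec_multilinear.
Qed.

Lemma pairing_bracketF V W (g : {ffun 'I_k.+1 -> 'I_d} -> R) :
  \sum_L (bracketF br V W) L * g L =
  \sum_J \sum_K (V J * W K) *
    \sum_L (bracketF_dec br (bvecs R J) (bvecs R K)) L * g L.
Proof.
rewrite /bracketF sum_ffun_pairing; apply: eq_bigr => J _.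
by rewrite sum_ffun_pairing; apply: eq_bigr => K _; rewrite scale_ffun_pairing.
Qed.

Lemma BformE U X :
  Bform br S U X = \sum_I U I * \sum_L X L * B (bvecs R I) (bvecs R L).
Proof.
rewrite /Bform; apply: eq_bigr => I _; rewrite mulr_sumr.
by apply: eq_bigr => L _; rewrite mulrA.
Qed.

Lemma BformC U W : Bform br S U W = Bform br S W U.
Proof.
rewrite /Bform exchange_big; apply: eq_bigr => I _; apply: eq_bigr => J _.
by rewrite [in LHS]B_decC; ring.
Qed.

Lemma Bform_invariant U V W :
  Bform br S U (bracketF br V W) = Bform br S (bracketF br U V) W.
Proof.
rewrite [RHS]BformC !BformE.
under eq_bigr do rewrite pairing_bracketF.
under [RHS]eq_bigr do rewrite pairing_bracketF.
under eq_bigr => a _ do under eq_bigr => b _ do under eq_bigr => c _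
  do rewrite pairing_bracketF_dec.
under [RHS]eq_bigr => c _ do under eq_bigr => a _ do under eq_bigr => b _
  do rewrite pairing_bracketF_dec.
pose D a b c := \sum_i B (bvecs R c)
  (upd (bvecs R b) i (br (bvecs R a) (bvecs R b i))).
transitivity (\sum_a \sum_b \sum_c U a * V b * W c * D a b c).
  apply: eq_bigr => a _; rewrite mulr_sumr; apply: eq_bigr => b _; rewrite mulr_sumr.
  apply: eq_bigr => c _; rewrite B_dec_invariant /D.
  by under eq_bigr do rewrite B_decC; ring.
symmetry; under eq_bigr => c _ do rewrite mulr_sumr; rewrite exchange_big.
apply: eq_bigr => a _; under eq_bigr => c _ do rewrite mulr_sumr; rewrite exchange_big.
by apply: eq_bigr => b _; apply: eq_bigr => c _; rewrite /D; ring.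
Qed.

End Invariance.

Theorem mainTheorem6 (R : realFieldType) (d k : nat)
    (br : ('I_k.+1 -> 'rV[R]_d) -> 'rV[R]_d -> 'rV[R]_d)
    (S : ('I_k.+1 -> 'rV[R]_d) -> R) :
  gen_metric_nLeibniz br S ->
  (forall U W : tensor R d k, Bform br S U W = Bform br S W U) /\
  (forall U V W : tensor R d k,
     Bform br S U (bracketF br V W) = Bform br S (bracketF br U V) W).
Proof.
move=> [[[_ br_linear] br_leibniz] [S_ml _] _ S_unitary S_symmetry].
split=> [U W | U V W]; first exact: BformC.
exact: Bform_invariant.
Qed.
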